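(* For all positive integers $\alpha_1,\alpha_2,\alpha_3$ and all $n\ge 0$, $$|P_n^2|\le [x^{n(\alpha_1+\alpha_2+\alpha_3)}]\left(\frac{1}{1-x^{\alpha_1}-x^{\alpha_2}-x^{\alpha_3}+x^{\alpha_1+\alpha_3}+2x^{\alpha_1+2\alpha_2+\alpha_3}}\right).$$
   Context: A system of $2$ stacks in series consists of an input queue, stack 1, stack 2, and an output queue. Moves: $m_1$ moves the front of the input queue onto stack 1; $m_2$ pops stack 1 and pushes onto stack 2; $m_3$ pops stack 2 and enqueues at the back of the output queue; a move is illegal if its source is empty. $P_n^2\subseteq S_n$ is the set of $\pi$ such that some legal sequence of moves, starting with $1,\dots,n$ (front to back) in the input queue and everything else empty, ends with $\pi(1),\dots,\pi(n)$ (front to back) in the output queue and everything else empty. $[x^N]F$ denotes the coefficient of $x^N$ in the power series $F$. *)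

From HB Require Import structures.
From mathcomp Require Import all_boot all_order all_algebra all_fingroup.
From Stdlib Require Import ClassicalEpsilon.
Set Implicit Arguments. Unset Strict Implicit. Unset Printing Implicit Defensive.
Import Order.TTheory GRing.Theory Num.Theory.

(* Two stacks in series.  A state is (input queue, stack 1, stack 2, output
   queue).  Queues are listed front to back; stacks are listed top first. *)
Record tstate := TState { inq : seq nat; st1 : seq nat; st2 : seq nat; outq : seq nat }.

Inductive move := m1 | m2 | m3.

Definition step (m : move) (s : tstate) : option tstate :=
  match m, s with
  | m1, TState (x :: i) a b o => Some (TState i (x :: a) b o)
  | m2, TState i (x :: a) b o => Some (TState i a (x :: b) o)
  | m3, TState i a (x :: b) o => Some (TState i a b (rcons o x))
  | _, _ => None
  end.

Fixpoint run (w : seq move) (s : tstate) : option tstate :=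
  match w with
  | [::] => Some s
  | m :: w' => match step m s with Some s' => run w' s' | None => None end
  end.

(* pi (a permutation of {1..n}, encoded as a permutation of 'I_n shifted by 1)
   is sortable: some legal move sequence takes input 1..n to output
   pi(1),...,pi(n) with everything else empty. *)
Definition in_P2 (n : nat) (pi : 'S_n) : Prop :=
  exists w : seq move,
    run w (TState (iota 1 n) [::] [::] [::])
    = Some (TState [::] [::] [::] [seq (pi i).+1 | i <- enum 'I_n]).

Definition in_P2b (n : nat) (pi : 'S_n) : bool :=
  if excluded_middle_informative (in_P2 pi) then true else false.

Definition P2 (n : nat) : {set 'S_n} := [set pi | in_P2b pi].

Definition denom (a1 a2 a3 : nat) : {poly int} :=
  (1 - 'X^a1 - 'X^a2 - 'X^a3 + 'X^(a1 + a3) + 2%:R *: 'X^(a1 + 2 * a2 + a3))%R.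

Definition is_inverse_series (D : {poly int}) (c : nat -> int) : Prop :=
  forall N : nat, (\sum_(k < N.+1) D`_k * c (N - k)%N)%R = ((N == 0%N)%:R)%R.

From HB Require Import structures.
From mathcomp Require Import all_boot all_order all_algebra all_fingroup.
From mathcomp Require Import ring zify.
From Stdlib Require Import ClassicalEpsilon.
Set Implicit Arguments. Unset Strict Implicit. Unset Printing Implicit Defensive.
Import Order.TTheory GRing.Theory Num.Theory.

(* 1. The factors m1 m3, m1 m2 m3 m2 and m1 m2 m2 m3 of a move word can be
      replaced by m3 m1, m2 m1 m2 m3 and m2 m1 m3 m2 without changing the effect
      of the word; each replacement decreases the word lexicographically
      (m1 > m2 > m3).  Hence every sortable permutation is sorted by a word
      avoiding these factors, i.e. by a word accepted by a five-state automaton.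
   2. Distinct permutations need distinct words, and a word sorting n items
      performs each move exactly n times, so with weight a_i on m_i it has
      weight N = n (a1 + a2 + a3).  Thus |P_n^2| is at most the number h_0(N)
      of accepted words of weight N.
   3. The numbers h_s(N) of words of weight N accepted from state s satisfy a
      linear system of shift recurrences; eliminating the four non-initial
      states shows that (h_0(N))_N is the inverse power series of the
      denominator D.  Since D(0) = 1 this inverse is unique, so h_0 = c. *)

Definition move_eqb (x y : move) : bool :=
  match x, y with m1, m1 | m2, m2 | m3, m3 => true | _, _ => false end.
Lemma move_eqP : Equality.axiom move_eqb.
Proof. by case; case; constructor. Qed.
HB.instance Definition _ := hasDecEq.Build move move_eqP.

Lemma run_cat (p q : seq move) (s : tstate) :
  run (p ++ q) s = obind (run q) (run p s).
Proof. by elim: p s => [|m p IH] s //=; case: (step m s). Qed.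

Lemma run_replace (p u v q : seq move) (s : tstate) :
  (forall t, run v t = run u t) -> run (p ++ v ++ q) s = run (p ++ u ++ q) s.
Proof. by move=> vu; rewrite !run_cat; case: (run p s) => //= t; rewrite !run_cat vu. Qed.

Definition forbidden (u : seq move) : bool :=
  u \in [:: [:: m1; m3]; [:: m1; m2; m3; m2]; [:: m1; m2; m2; m3]].

Definition replacement (u : seq move) : seq move :=
  match u with
  | [:: m1; m3] => [:: m3; m1]
  | [:: m1; m2; m3; m2] => [:: m2; m1; m2; m3]
  | _ => [:: m2; m1; m3; m2]
  end.

(* Words of equal length are compared lexicographically through their base-3
   code, with digits m1 = 2, m2 = 1, m3 = 0. *)
Definition move_rank (m : move) : nat := match m with m1 => 2 | m2 => 1 | m3 => 0 end.

Fixpoint code (w : seq move) : nat :=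
  if w is m :: w' then move_rank m * 3 ^ size w' + code w' else 0.

Lemma code_cat (p q : seq move) : code (p ++ q) = code p * 3 ^ size q + code q.
Proof. by elim: p => [|m p IH] //=; rewrite IH size_cat expnD; ring. Qed.

Lemma code_replace (p u v q : seq move) : size v = size u -> code v < code u ->
  code (p ++ v ++ q) < code (p ++ u ++ q).
Proof.
move=> sz lt; rewrite !code_cat !size_cat sz ltn_add2l ltn_add2r ltn_pmul2r //.
by rewrite expn_gt0.
Qed.

Lemma replacement_spec (u : seq move) : forbidden u ->
  [/\ forall s, run (replacement u) s = run u s,
      size (replacement u) = size u & code (replacement u) < code u].
Proof.
rewrite /forbidden !inE => /or3P [] /eqP -> ; split => // -[i a b o].
- by case: i => [|x i]; case: b.
- by case: i => [|x i]; case: a => [|y [|y' a]]; case: b.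
- by case: i => [|x i]; case: a => [|y [|y' a]]; case: b.
Qed.

(* An automaton recognising the words without forbidden factors: its state
   records the longest suffix read so far that is a proper prefix of a
   forbidden factor (this suffix is [pending s]). *)
Inductive astate := Q0 | QA | QB | QC | QD.

Definition trans (s : astate) (m : move) : option astate :=
  match s, m with
  | _, m1 => Some QA
  | Q0, _ => Some Q0
  | QA, m2 => Some QB
  | QB, m2 => Some QC
  | QB, m3 => Some QD
  | QC, m2 => Some Q0
  | QD, m3 => Some Q0
  | _, _ => None
  end.

Fixpoint accepts (s : astate) (w : seq move) : bool :=
  if w is m :: w' then (if trans s m is Some s' then accepts s' w' else false)
  else true.

Definition pending (s : astate) : seq move :=
  match s with
  | Q0 => [::] | QA => [:: m1] | QB => [:: m1; m2]
  | QC => [:: m1; m2; m2] | QD => [:: m1; m2; m3]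
  end.

Lemma trans_pending (s s' : astate) (m : move) :
  trans s m = Some s' -> suffix (pending s') (rcons (pending s) m).
Proof. by case: s; case: m => //= -[<-]. Qed.

Lemma trans_forbidden (s : astate) (m : move) :
  trans s m = None -> forbidden (rcons (pending s) m).
Proof. by case: s; case: m. Qed.

Lemma rejected_factor (s : astate) (w : seq move) : accepts s w = false ->
  exists p u q, pending s ++ w = p ++ u ++ q /\ forbidden u.
Proof.
elim: w s => [|m w IH] s //=.
case E: (trans s m) => [s'|] rej.
- have [p [u [q [e f]]]] := IH s' rej.
  have /suffixP [r er] := trans_pending E.
  exists (r ++ p), u, q; split => //.
  by rewrite -cat_rcons er -catA e catA.
- exists [::], (rcons (pending s) m), w; split; first by rewrite cat_rcons.
  exact: trans_forbidden.
Qed.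

(* Normal form: every effect of a legal word is achieved by an accepted word,
   by well-founded rewriting on the code. *)
Lemma exists_accepted_word (w : seq move) (st t : tstate) :
  run w st = Some t -> exists2 w', accepts Q0 w' & run w' st = Some t.
Proof.
have [k] := ubnP (code w); elim: k w => // k IH w lt_wk hr.
case acc_w: (accepts Q0 w); first by exists w.
have [p [u [q [/= w_eq forb_u]]]] := rejected_factor acc_w; subst w.
have [run_u size_u code_u] := replacement_spec forb_u.
apply: (IH (p ++ replacement u ++ q)).
- exact: leq_trans (code_replace p q size_u code_u) lt_wk.
- by rewrite (run_replace _ _ _ run_u).
Qed.

(* Conservation of items: each move transfers one item between two places. *)
Lemma run_counts (w : seq move) (st t : tstate) : run w st = Some t ->
  [/\ size (inq st) = size (inq t) + count_mem m1 w,
      size (st1 t) + count_mem m2 w = size (st1 st) + count_mem m1 w &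
      size (st2 t) + count_mem m3 w = size (st2 st) + count_mem m2 w].
Proof.
elim: w st => [|m w IH] [i a b o] /=; first by case=> <- /=; rewrite !addn0.
case: m => /=.
- by case: i => [|x i] //= /IH /= [? ? ?]; split; lia.
- by case: a => [|x a] //= /IH /= [? ? ?]; split; lia.
- by case: b => [|x b] //= /IH /= [? ? ?]; split; lia.
Qed.

Section AcceptedWords.

(* Moves carry positive weights f m; [naccepted k s N] counts the words of
   weight N accepted from state s, computed with recursion depth k > N. *)
Variable f : move -> nat.
Hypothesis f_gt0 : forall m, 0 < f m.

Definition weight (w : seq move) : nat := sumn (map f w).

Lemma weight_count (w : seq move) : weight w =
  f m1 * count_mem m1 w + f m2 * count_mem m2 w + f m3 * count_mem m3 w.
Proof.
elim: w => [|m w IH]; first by rewrite /weight /= !muln0.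
by rewrite /weight /= -/(weight w) IH; case: m => /=; lia.
Qed.

Definition accepted_of (s : astate) (N : nat) (w : seq move) : bool :=
  accepts s w && (weight w == N).

Definition branch (g : astate -> nat -> nat) (s : astate) (m : move) (N : nat) : nat :=
  if trans s m is Some s' then (if f m <= N then g s' (N - f m) else 0) else 0.

Fixpoint naccepted (k : nat) (s : astate) (N : nat) : nat :=
  if k is k'.+1 then
    (N == 0) + (branch (naccepted k') s m1 N + branch (naccepted k') s m2 N
                + branch (naccepted k') s m3 N)
  else 0.

Definition starts_with (m : move) (w : seq move) : bool :=
  if w is x :: _ then x == m else false.

Lemma size_by_head (l : seq (seq move)) : size l = count_mem [::] l +
  (count (starts_with m1) l + count (starts_with m2) l + count (starts_with m3) l).
Proof. by elim: l => [|w l IH] //=; rewrite IH; case: w => [|[] w] /=; lia. Qed.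

(* The empty word is the only word of weight 0. *)
Lemma count_empty_le (s : astate) (N : nat) (l : seq (seq move)) :
  uniq l -> all (accepted_of s N) l -> count_mem [::] l <= (N == 0).
Proof.
move=> ul /allP acc_l; rewrite count_uniq_mem //.
case: N acc_l => [|N] acc_l; first by case: (_ \in _).
by case hin: ([::] \in l) => //; have := acc_l _ hin.
Qed.

(* Removing the first letter m injects the words starting with m into the
   words accepted from [trans s m] of weight N - f m; so the branch bound
   follows from the bound one level down. *)
Lemma count_head_le (k : nat) (s : astate) (m : move) (N : nat) (l : seq (seq move)) :
  (forall s' N' l', N' < k -> uniq l' -> all (accepted_of s' N') l' ->
                    size l' <= naccepted k s' N') ->
  N <= k -> uniq l -> all (accepted_of s N) l ->
  count (starts_with m) l <= branch (naccepted k) s m N.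
Proof.
move=> IH le_Nk ul /allP acc_l; rewrite /branch.
have no_head : (forall w, w \in l -> starts_with m w -> False) ->
    count (starts_with m) l = 0.
  move=> none; apply/eqP; rewrite -leqn0 leqNgt -has_count.
  by apply/hasP => -[w wl hw]; exact: none wl hw.
case E: (trans s m) => [s'|]; last first.
  rewrite no_head // => -[|x w] // /acc_l /andP [/= + _] /eqP ex.
  by rewrite ex E.
case: (leqP (f m) N) => hm; last first.
  rewrite no_head // => -[|x w] // /acc_l /andP [_ /eqP wt] /eqP ex.
  by move: hm; rewrite -wt /weight /= ex; lia.
rewrite -size_filter -(size_map behead); apply: IH.
- by have := f_gt0 m; lia.
- rewrite map_inj_in_uniq ?filter_uniq //.
  move=> [|x w] [|y v]; rewrite !mem_filter //= => /andP [/eqP -> _] /andP [/eqP -> _].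
  by move=> ->.
- apply/allP => w /mapP [[|x v]]; rewrite mem_filter //= => /andP [/eqP ex /acc_l].
  rewrite /accepted_of /= ex E => /andP [acc_v /eqP wt] ->.
  by rewrite acc_v /= -wt /weight /= addKn.
Qed.

Lemma naccepted_ge (k : nat) (s : astate) (N : nat) (l : seq (seq move)) :
  N < k -> uniq l -> all (accepted_of s N) l -> size l <= naccepted k s N.
Proof.
elim: k s N l => // k IH s N l lt_Nk ul acc_l.
rewrite size_by_head /= leq_add ?(count_empty_le ul acc_l) //.
by rewrite !leq_add ?(count_head_le _ IH).
Qed.

Lemma naccepted_fuel (k1 k2 : nat) (s : astate) (N : nat) :
  N < k1 -> N < k2 -> naccepted k1 s N = naccepted k2 s N.
Proof.
elim: k1 k2 s N => [|k1 IH] [|k2] s N //= lt1 lt2.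
congr (_ + (_ + _ + _)); rewrite /branch.
all: case: (trans _ _) => // s'; case: ifP => // le; apply: IH.
all: by move: (f_gt0 m1) (f_gt0 m2) (f_gt0 m3); lia.
Qed.

End AcceptedWords.

(* A word sorting n items performs every move n times. *)
Lemma sorting_weight (f : move -> nat) (n : nat) (o : seq nat) (w : seq move) :
  run w (TState (iota 1 n) [::] [::] [::]) = Some (TState [::] [::] [::] o) ->
  weight f w = n * (f m1 + f m2 + f m3).
Proof.
move=> /run_counts[]; rewrite /= size_iota !add0n weight_count => -> -> ->.
ring.
Qed.

Definition output (n : nat) (p : 'S_n) : seq nat := [seq (p i).+1 | i <- enum 'I_n].

Lemma output_inj (n : nat) : injective (@output n).
Proof.
move=> p1 p2 e; apply/permP => i; apply: val_inj.
have nth_out p : nth 0 (output p) i = (p i).+1.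
  by rewrite (nth_map i) ?size_enum_ord // nth_ord_enum.
by have := nth_out p1; rewrite e nth_out => -[].
Qed.

Definition sorts (n : nat) (p : 'S_n) (w : seq move) : Prop :=
  run w (TState (iota 1 n) [::] [::] [::]) = Some (TState [::] [::] [::] (output p)).

(* A chosen accepted word sorting p (meaningful when p is sortable). *)
Definition sorting_word (n : nat) (p : 'S_n) : seq move :=
  epsilon (inhabits [::]) (fun w => accepts Q0 w /\ sorts p w).

Lemma sorting_wordP (n : nat) (p : 'S_n) :
  p \in P2 n -> accepts Q0 (sorting_word p) /\ sorts p (sorting_word p).
Proof.
rewrite inE /in_P2b; case: excluded_middle_informative => // -[w sorts_w] _.
apply: (epsilon_spec (inhabits [::]) (fun w => accepts Q0 w /\ sorts p w)).
by have [w' ] := exists_accepted_word sorts_w; exists w'.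
Qed.

Lemma card_P2_le (f : move -> nat) (f_gt0 : forall m, 0 < f m) (n : nat) :
  let N := n * (f m1 + f m2 + f m3) in #|P2 n| <= naccepted f N.+1 Q0 N.
Proof.
rewrite cardE -(size_map (@sorting_word n)); apply: naccepted_ge => //.
- rewrite map_inj_in_uniq ?enum_uniq // => p1 p2.
  rewrite !mem_enum => /sorting_wordP [_ s1] /sorting_wordP [_ s2] e.
  by apply: output_inj; move: s1 s2; rewrite /sorts e => -> -[].
- apply/allP => w /mapP [p]; rewrite mem_enum => /sorting_wordP [acc_w sorts_w] ->.
  by rewrite /accepted_of acc_w (sorting_weight _ sorts_w) /=.
Qed.

Local Open Scope ring_scope.

(* Coefficientwise view of power series: [delta] is the series 1 and
   [shift g a] is x^a G(x), for G the series with coefficients g. *)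
Definition delta (N : nat) : int := (N == 0)%:R.

Definition shift (g : nat -> int) (a N : nat) : int :=
  if (a <= N)%N then g (N - a)%N else 0.

Lemma shift0 (g : nat -> int) (N : nat) : shift g 0 N = g N.
Proof. by rewrite /shift subn0. Qed.

Lemma shift_ext (g1 g2 : nat -> int) (a N : nat) :
  (forall M, g1 M = g2 M) -> shift g1 a N = shift g2 a N.
Proof. by move=> e; rewrite /shift e. Qed.

Lemma shiftB (g1 g2 : nat -> int) (a N : nat) :
  shift (fun M => g1 M - g2 M) a N = shift g1 a N - shift g2 a N.
Proof. by rewrite /shift; case: ifP; rewrite ?subr0. Qed.

Lemma shiftZ (c : int) (g : nat -> int) (a N : nat) :
  shift (fun M => c * g M) a N = c * shift g a N.
Proof. by rewrite /shift; case: ifP; rewrite ?mulr0. Qed.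

Lemma shift_shift (g : nat -> int) (a b N : nat) :
  shift (shift g a) b N = shift g (a + b) N.
Proof.
rewrite /shift; case: (leqP b N) => hb; case: (leqP (a + b) N) => hab.
- by rewrite ifT; [congr g; lia | lia].
- by rewrite ifF //; lia.
- lia.
- by [].
Qed.

Definition conv (p : {poly int}) (g : nat -> int) (N : nat) : int :=
  \sum_(k < N.+1) p`_k * g (N - k)%N.

Lemma convD (p q : {poly int}) (g : nat -> int) (N : nat) :
  conv (p + q) g N = conv p g N + conv q g N.
Proof. by rewrite /conv -big_split; apply: eq_bigr => k _; rewrite coefD mulrDl. Qed.

Lemma convN (p : {poly int}) (g : nat -> int) (N : nat) : conv (- p) g N = - conv p g N.
Proof. by rewrite /conv -sumrN; apply: eq_bigr => k _; rewrite coefN mulNr. Qed.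

Lemma convZ (c : int) (p : {poly int}) (g : nat -> int) (N : nat) :
  conv (c *: p) g N = c * conv p g N.
Proof. by rewrite /conv mulr_sumr; apply: eq_bigr => k _; rewrite coefZ mulrA. Qed.

Lemma convXn (a : nat) (g : nat -> int) (N : nat) : conv 'X^a g N = shift g a N.
Proof.
rewrite /conv /shift; under eq_bigr do rewrite coefXn.
case: (leqP a N) => ha; last first.
  apply: big1 => i _; case: eqP => [ei|_]; last by rewrite mul0r.
  by have := ltn_ord i; lia.
rewrite (bigD1 (Ordinal (ha : (a < N.+1)%N))) //= eqxx mul1r big1 ?addr0 // => i ne.
case: eqP => [ei|_]; last by rewrite mul0r.
by case/eqP: ne; apply: val_inj.
Qed.

Lemma conv1 (g : nat -> int) (N : nat) : conv 1 g N = g N.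
Proof. by rewrite -(expr0 'X) convXn shift0. Qed.

Lemma conv_denom (a1 a2 a3 : nat) (g : nat -> int) (N : nat) :
  conv (denom a1 a2 a3) g N =
  g N - shift g a1 N - shift g a2 N - shift g a3 N + shift g (a1 + a3) N
  + 2%:R * shift g (a1 + 2 * a2 + a3) N.
Proof. by rewrite /denom !(convD, convN, convZ, convXn, conv1). Qed.

Lemma conv_inj (D : {poly int}) (g1 g2 : nat -> int) : D`_0 = 1 ->
  (forall N, conv D g1 N = conv D g2 N) -> forall N, g1 N = g2 N.
Proof.
move=> D0 e N; elim/ltn_ind: N => N IH.
have := e N; rewrite /conv !big_ord_recl D0 !mul1r subn0.
rewrite (eq_bigr (fun i : 'I_N => D`_(bump 0 i) * g2 (N - bump 0 i)%N)).
  by move/addIr.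
by move=> i _; rewrite IH // lift0; have := ltn_ord i; lia.
Qed.

Lemma denom_coef0 (a1 a2 a3 : nat) : (0 < a1)%N -> (0 < a2)%N -> (0 < a3)%N ->
  (denom a1 a2 a3)`_0 = 1.
Proof.
move=> h1 h2 h3; rewrite /denom !(coefD, coefN, coefZ, coefXn, coef1).
have z a : (0 < a)%N -> (0%N == a) = false by case: a.
by rewrite eqxx !z ?addn_gt0 ?h1 ?h3 ?orbT //= !subr0 mulr0 !addr0.
Qed.

Section AcceptedSeries.

Variable f : move -> nat.
Hypothesis f_gt0 : forall m, (0 < f m)%N.

Definition count_from (s : astate) (N : nat) : int := (naccepted f N.+1 s N)%:Z.

Definition step_count (s : astate) (m : move) (N : nat) : int :=
  if trans s m is Some s' then shift (count_from s') (f m) N else 0.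

Lemma count_from_rec (s : astate) (N : nat) : count_from s N =
  delta N + (step_count s m1 N + step_count s m2 N + step_count s m3 N).
Proof.
rewrite /count_from /= !PoszD; congr (_ + (_ + _ + _)).
  by rewrite /delta natz.
all: rewrite /step_count /branch /shift; case: (trans _ _) => // s'.
all: case: ifP => // le; congr Posz; apply: naccepted_fuel => //.
all: by move: (f_gt0 m1) (f_gt0 m2) (f_gt0 m3); lia.
Qed.

(* Step 3: eliminating h_A, ..., h_D from the state equations gives
   D(x) h_0(x) = 1 for the denominator D built from the weights. *)
Lemma count_from_inverse (N : nat) :
  conv (denom (f m1) (f m2) (f m3)) (count_from Q0) N = delta N.
Proof.
set h := count_from; set a1 := f m1; set a2 := f m2; set a3 := f m3.
have E0 M : h Q0 M = delta M + shift (h QA) a1 M + shift (h Q0) a2 M + shift (h Q0) a3 M.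
  by rewrite /h count_from_rec //= !addrA.
have EA M : h QA M = delta M + shift (h QA) a1 M + shift (h QB) a2 M.
  by rewrite /h count_from_rec //= !addrA addr0.
have EB M : h QB M = delta M + shift (h QA) a1 M + shift (h QC) a2 M + shift (h QD) a3 M.
  by rewrite /h count_from_rec //= !addrA.
have EC M : h QC M = delta M + shift (h QA) a1 M + shift (h Q0) a2 M.
  by rewrite /h count_from_rec //= !addrA addr0.
have ED M : h QD M = delta M + shift (h QA) a1 M + shift (h Q0) a3 M.
  by rewrite /h count_from_rec //= !addrA addr0.
have LC M : h QC M = h Q0 M - shift (h Q0) a3 M by rewrite EC E0; ring.
have LD M : h QD M = h Q0 M - shift (h Q0) a2 M by rewrite ED E0; ring.
have LB M : h QB M = h Q0 M - 2%:R * shift (h Q0) (a2 + a3) M.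
  rewrite EB (shift_ext _ _ LC) (shift_ext _ _ LD) !shiftB !shift_shift.
  by rewrite (addnC a3 a2) E0; ring.
have LA M : h QA M = h Q0 M - shift (h Q0) a3 M - 2%:R * shift (h Q0) (a2 + a3 + a2) M.
  by rewrite EA (shift_ext _ _ LB) shiftB shiftZ shift_shift {1}E0; ring.
rewrite conv_denom {1}E0 (shift_ext _ _ LA) !shiftB shiftZ !shift_shift.
have -> : (a2 + a3 + a2 + a1 = a1 + 2 * a2 + a3)%N by lia.
by rewrite (addnC a3 a1); ring.
Qed.

End AcceptedSeries.

Definition move_weight (a1 a2 a3 : nat) (m : move) : nat :=
  match m with m1 => a1 | m2 => a2 | m3 => a3 end.

Theorem proposition5 (a1 a2 a3 : nat) (h1 : (0 < a1)%N) (h2 : (0 < a2)%N)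
  (h3 : (0 < a3)%N) (n : nat) (c : nat -> int)
  (hc : is_inverse_series (denom a1 a2 a3) c) :
  (((#|P2 n|)%:Z) <= c (n * (a1 + a2 + a3))%N)%R.
Proof.
pose f := move_weight a1 a2 a3.
have f_gt0 : forall m, (0 < f m)%N by case.
have c_eq N : c N = count_from f Q0 N.
  apply: (conv_inj (denom_coef0 h1 h2 h3)) => {}N.
  by rewrite (count_from_inverse f_gt0); exact: hc.
by rewrite c_eq lez_nat; exact: card_P2_le.
Qed.
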